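(* Let $B$ be an $A$-algebra which is an integral domain, and let $f:A\to B$ be an additive group homomorphism. Then for every positive integer $d$ and every $c\in A(d)$, $$M_d(f)(z+c)-M_d(f)(z)=M_d(1)\,f(c)\quad\text{in } B[z].$$
   Context: $q$ is a power of a prime, $A=\mathbb{F}_q[\theta]$, $A_+(d)$ is the set of monic polynomials in $A$ of degree $d$, and for $d\ge1$, $A(d)$ is the $\mathbb{F}_q$-vector space of polynomials in $A$ of degree $<d$. For a function $f:A\to B$ and $d\ge0$, the Carlitz approximation is $M_d(f)(z):=\sum_{b\in A_+(d)} f(b)\prod_{a\in A_+(d)\setminus\{b\}}(z-a)\in B[z]$. $M_d(1)$ denotes $M_d$ applied to the constant function $1$; it is a constant (equal to the image of $(-1)^dD_d/L_d$, where $D_d$ is the product of all monic polynomials of degree $d$ and $L_d$ the least common multiple of all polynomials of degree $d$). *)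

From HB Require Import structures.
From mathcomp Require Import all_boot all_order all_algebra.
Set Implicit Arguments. Unset Strict Implicit. Unset Printing Implicit Defensive.
Import GRing.Theory.
Local Open Scope ring_scope.

(* F is the finite field F_q (q = #|F|, automatically a prime power);
   A = {poly F} = F_q[theta]. *)

Definition monic_of (F : finFieldType) (d : nat) (t : d.-tuple F) : {poly F} :=
  'X^d + \sum_(i < d) tnth t i *: 'X^i.

Definition Aplus (F : finFieldType) (d : nat) : seq {poly F} :=
  [seq monic_of t | t : d.-tuple F].

(* Carlitz approximation M_d(f)(z) in B[z]; phi : A -> B is the structure map
   of the A-algebra B, used to view a in A inside B. *)
Definition Mapprox (F : finFieldType) (B : comNzRingType)
    (phi : {poly F} -> B) (f : {poly F} -> B) (d : nat) : {poly B} :=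
  \sum_(b <- Aplus F d)
     (f b)%:P * \prod_(a <- Aplus F d | a != b) ('X - (phi a)%:P).

From HB Require Import structures.
From mathcomp Require Import all_boot all_order all_algebra.
Import GRing.Theory.
Set Implicit Arguments. Unset Strict Implicit. Unset Printing Implicit Defensive.
Local Open Scope ring_scope.

(* Translation by [c] with [deg c < d] permutes the monic polynomials of
   degree [d], so substituting [z + c] in [M_d(f)] merely reindexes the sum,
   giving [sum_b f(b + c) prod_(a != b) (z - a)]; additivity of [f] turns the
   difference with [M_d(f)] into [f(c) M_d(1)]. *)

Section MonicPolynomials.
Variable F : finFieldType.

Lemma monic_ofE d (t : d.-tuple F) : monic_of t = 'X^d + \poly_(i < d) t`_i.
Proof.
by rewrite /monic_of poly_def; congr (_ + _); apply: eq_bigr => i _; rewrite (tnth_nth 0).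
Qed.

Lemma coef_monic_of d (t : d.-tuple F) k :
  (monic_of t)`_k = (k == d)%:R + (if (k < d)%N then t`_k else 0).
Proof. by rewrite monic_ofE coefD coefXn coef_poly. Qed.

Lemma monic_of_inj d : injective (@monic_of F d).
Proof.
move=> t1 t2 eq_t; apply: eq_from_tnth => i; rewrite !(tnth_nth 0).
have := congr1 (fun p : {poly F} => p`_i) eq_t.
by rewrite !coef_monic_of ltn_ord ltn_eqF // !add0r.
Qed.

Lemma uniq_Aplus d : uniq (Aplus F d).
Proof. by rewrite /Aplus map_inj_uniq ?enum_uniq //; apply: monic_of_inj. Qed.

Lemma mem_Aplus d (p : {poly F}) :
  (p \in Aplus F d) = (p \is monic) && (size p == d.+1).
Proof.
apply/mapP/andP => [[t _ ->] | [mon_p /eqP size_p]].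
  rewrite monic_ofE; set q := \poly_(i < d) _.
  have size_q : (size q < size ('X^d : {poly F}))%N.
    by rewrite size_polyXn ltnS size_poly.
  by rewrite monicE lead_coefDl // size_polyDl // size_polyXn lead_coefXn.
exists [tuple p`_i | i < d]; first by rewrite mem_enum.
apply/polyP => k; rewrite coef_monic_of; case: ltngtP => [lt_kd | lt_dk | ->].
- by rewrite mulr0n add0r (nth_mktuple _ _ (Ordinal lt_kd)).
- by rewrite mulr0n addr0 nth_default // size_p.
- by rewrite mulr1n addr0 -(monicP mon_p) lead_coefE size_p.
Qed.

Lemma Aplus_addr d (c p : {poly F}) :
  (size c <= d)%N -> p \in Aplus F d -> p + c \in Aplus F d.
Proof.
move=> size_c; rewrite !mem_Aplus => /andP[mon_p /eqP size_p].
have lt_cp : (size c < size p)%N by rewrite size_p ltnS.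
by rewrite monicE lead_coefDl // size_polyDl // size_p -monicE mon_p eqxx.
Qed.

Lemma perm_Aplus_shift d (c : {poly F}) :
  (size c <= d)%N -> perm_eq [seq p + c | p <- Aplus F d] (Aplus F d).
Proof.
move=> size_c; have uniq_shift : uniq [seq p + c | p <- Aplus F d].
  by rewrite map_inj_uniq ?uniq_Aplus //; apply: addIr.
apply: uniq_perm => // [|p]; first exact: uniq_Aplus.
apply/mapP/idP => [[q Aq ->] | Ap]; first exact: Aplus_addr.
exists (p - c); last by rewrite subrK.
by apply: Aplus_addr; rewrite ?size_polyN.
Qed.

End MonicPolynomials.

Section LagrangeSum.
Variables (R : zmodType) (B : comNzRingType) (phi : {additive R -> B}).

Definition lagrange_sum (f : R -> B) (s : seq R) : {poly B} :=
  \sum_(b <- s) (f b)%:P * \prod_(a <- s | a != b) ('X - (phi a)%:P).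

Lemma lagrange_sum_comp_shift (f : R -> B) (s : seq R) (c : R) :
  perm_eq [seq a + c | a <- s] s ->
  lagrange_sum f s \Po ('X + (phi c)%:P) = lagrange_sum (fun b => f (b + c)) s.
Proof.
move=> perm_s; rewrite /lagrange_sum -{1}(perm_big _ perm_s) big_map rmorph_sum.
apply: eq_bigr => b _; rewrite /= comp_polyM comp_polyC rmorph_prod.
rewrite -(perm_big _ perm_s) big_map; congr (_ * _); apply: eq_big => [a | a _].
  by rewrite (inj_eq (addIr c)).
by rewrite /= comp_polyB comp_polyX comp_polyC raddfD polyCD opprD addrACA subrr addr0.
Qed.

End LagrangeSum.

Theorem theorem4p1p9 (F : finFieldType) (B : idomainType)
    (phi : {rmorphism {poly F} -> B}) (f : {additive {poly F} -> B})
    (d : nat) (c : {poly F}) :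
  (0 < d)%N -> (size c <= d)%N ->
  Mapprox phi f d \Po ('X + (phi c)%:P) - Mapprox phi f d
    = Mapprox phi (fun _ => 1) d * (f c)%:P.
Proof.
move=> _ size_c.
rewrite -[Mapprox phi f d]/(lagrange_sum phi f (Aplus F d)).
rewrite lagrange_sum_comp_shift ?perm_Aplus_shift // -sumrB /Mapprox big_distrl.
apply: eq_bigr => b _.
by rewrite -mulrBl raddfD polyCD addrAC subrr add0r mul1r mulrC.
Qed.
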